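(* Let $r,k\geq 2$ and let $G$ be a non-empty $(v,b,r,k)$-configuration. Then there exist three edges of $G$ whose six endpoints are pairwise distinct.
   Context: For positive integers $v,b,r,k$, a $(v,b,r,k)$-configuration is a connected bipartite graph with $v$ vertices on one side, each of degree $r$, and $b$ vertices on the other side, each of degree $k$, containing no cycle of length $4$. *)

From mathcomp Require Import all_boot.
Set Implicit Arguments. Unset Strict Implicit. Unset Printing Implicit Defensive.

(* A bipartite graph with point side 'I_v and block side 'I_b is given by its
   incidence relation inc : 'I_v -> 'I_b -> bool (p ~ B iff inc p B). *)

Definition adj (v b : nat) (inc : 'I_v -> 'I_b -> bool) : rel ('I_v + 'I_b) :=
  fun x y => match x, y with
             | inl p, inr B => inc p B
             | inr B, inl p => inc p B
             | _, _ => false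
             end.

(* (v,b,r,k)-configuration: connected, points of degree r, blocks of degree k,
   no 4-cycle (two distinct points lie in at most one common block). *)
Definition configuration (v b r k : nat) (inc : 'I_v -> 'I_b -> bool) : Prop :=
  [/\ (forall x y : 'I_v + 'I_b, connect (adj inc) x y),
      (forall p : 'I_v, #|[set B | inc p B]| = r),
      (forall B : 'I_b, #|[set p | inc p B]| = k) &
      (forall (p q : 'I_v) (B C : 'I_b), p != q -> B != C ->
         ~~ [&& inc p B, inc q B, inc p C & inc q C])].

From mathcomp Require Import all_boot.

Set Implicit Arguments.
Unset Strict Implicit.
Unset Printing Implicit Defensive.

(* Take a point p on two blocks B1, B2, and points q1 on B1 and q2 on B2 other
   than p.  The edges p B1, q2 B2 and q1 C1, for any block C1 <> B1 through q1,
   are disjoint: a coincidence q1 = q2 or C1 = B2 would give p and q1 two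
   common blocks, i.e. a 4-cycle. *)

Lemma card_gt1_neq (T : finType) (A : {pred T}) (x : T) :
  1 < #|A| -> exists2 y, y \in A & y != x.
Proof.
case/card_gt1P=> [y [z [yA zA neq_yz]]].
have [eq_yx|neq_yx] := eqVneq y x; last by exists y.
by exists z; rewrite // -eq_yx eq_sym.
Qed.

Section Configuration.

Variables (v b r k : nat) (inc : 'I_v -> 'I_b -> bool).
Hypothesis conf : configuration r k inc.

Lemma config_point_other_block (p : 'I_v) (B : 'I_b) :
  1 < r -> exists2 C, inc p C & C != B.
Proof.
case: conf => _ deg_pt _ _ r_gt1.
have [|C] := @card_gt1_neq _ [set C | inc p C] B; first by rewrite deg_pt.
by rewrite inE; exists C.
Qed.

Lemma config_point_two_blocks (p : 'I_v) :
  1 < r -> exists B1 B2, [/\ inc p B1, inc p B2 & B2 != B1].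
Proof.
case: conf => _ deg_pt _ _ r_gt1.
have /card_gt1P[B1 [B2 []]] : 1 < #|[set B | inc p B]| by rewrite deg_pt.
by rewrite !inE eq_sym => pB1 pB2 neq_B21; exists B1, B2.
Qed.

Lemma config_block_other_point (B : 'I_b) (p : 'I_v) :
  1 < k -> exists2 q, inc q B & q != p.
Proof.
case: conf => _ _ deg_blk _ k_gt1.
have [|q] := @card_gt1_neq _ [set q | inc q B] p; first by rewrite deg_blk.
by rewrite inE; exists q.
Qed.

Lemma config_common_block_eq (p q : 'I_v) (B C : 'I_b) :
  p != q -> inc p B -> inc q B -> inc p C -> inc q C -> B = C.
Proof.
case: conf => _ _ _ no_C4 neq_pq pB qB pC qC.
apply/eqP/negPn/negP => neq_BC.
by have := no_C4 _ _ _ _ neq_pq neq_BC; rewrite pB qB pC qC.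
Qed.

Lemma config_has_point : 0 < k -> 0 < v + b -> 0 < v.
Proof.
case: conf => _ _ deg_blk _ k_gt0.
case: v inc deg_blk => [|//] inc0 deg_blk; case: b inc0 deg_blk => [//|b'] inc0 deg_blk _.
have := deg_blk ord0; rewrite (_ : [set p | inc0 p ord0] = set0) ?cards0.
  by move=> k0; rewrite -k0 in k_gt0.
by apply/setP => -[].
Qed.

End Configuration.

Theorem lemma4 (v b r k : nat) (inc : 'I_v -> 'I_b -> bool) :
  2 <= r -> 2 <= k -> configuration r k inc -> 0 < v + b ->
  exists (p1 p2 p3 : 'I_v) (B1 B2 B3 : 'I_b),
    [/\ inc p1 B1, inc p2 B2, inc p3 B3,
        [&& p1 != p2, p1 != p3 & p2 != p3] &
        [&& B1 != B2, B1 != B3 & B2 != B3]].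
Proof.
move=> r_gt1 k_gt1 conf vb_gt0.
have v_gt0 := config_has_point conf (ltnW k_gt1) vb_gt0.
pose p := Ordinal v_gt0.
have [B1 [B2 [pB1 pB2 neq_B21]]] := config_point_two_blocks conf p r_gt1.
have [q1 q1B1 neq_q1p] := config_block_other_point conf B1 p k_gt1.
have [q2 q2B2 neq_q2p] := config_block_other_point conf B2 p k_gt1.
have [C1 q1C1 neq_C1B1] := config_point_other_block conf q1 B1 r_gt1.
have neq_q12 : q1 != q2.
  apply: contra_neq neq_B21 => eq_q12; rewrite -{}eq_q12 in q2B2.
  by apply: (config_common_block_eq conf _ pB2 q2B2 pB1 q1B1); rewrite eq_sym.
have neq_C1B2 : C1 != B2.
  apply: contra_neq neq_B21 => eq_C1B2; rewrite {}eq_C1B2 in q1C1.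
  by apply: (config_common_block_eq conf _ pB2 q1C1 pB1 q1B1); rewrite eq_sym.
exists q1, p, q2, C1, B1, B2; split => //.
- by rewrite neq_q1p neq_q12 eq_sym neq_q2p.
- by rewrite neq_C1B1 neq_C1B2 eq_sym neq_B21.
Qed.
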